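(* A (Hausdorff, real) topological vector space $E$ contains a linear subspace topologically isomorphic to $\mathbb{R}^{\mathbb{N}}$ if and only if $E$ contains a non-trivial $\mathbb{R}^{\mathbb{N}}$-convergent sequence.
   Context: $\mathbb{R}^{\mathbb{N}}$ carries the Tychonoff product topology. A sequence $\{a_n:n\in\mathbb{N}\}$ in $E$ is $\mathbb{R}^{\mathbb{N}}$-convergent if for every real sequence $\{r_n:n\in\mathbb{N}\}$ the series $\sum_{n}r_na_n$ converges in $E$ (i.e. its partial sums converge to some element of $E$). Such a sequence is non-trivial if $a_n\neq 0$ for infinitely many $n$. *)

From HB Require Import structures.
From mathcomp Require Import all_boot all_order all_algebra.
From mathcomp Require Import all_classical all_reals all_analysis.
Set Implicit Arguments. Unset Strict Implicit. Unset Printing Implicit Defensive.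
Import Order.TTheory GRing.Theory Num.Theory.
Import numFieldTopology.Exports numFieldNormedType.Exports.
Local Open Scope classical_set_scope.
Local Open Scope ring_scope.

Definition RN (R : realType) : topologicalType := {ptws nat -> R}.

Definition top_lin_embedding (R : realType) (E : topologicalLmodType R)
    (f : RN R -> E) : Prop :=
  [/\ (forall (a : R) (x y : RN R),
         f (fun n => a * x n + y n) = a *: f x + f y),
      injective f,
      continuous f &
      (forall U : set (RN R), open U ->
         exists V : set E, open V /\ f @` U = V `&` range f)].

Definition RN_convergent (R : realType) (E : topologicalLmodType R)
    (a : nat -> E) : Prop :=
  forall r : nat -> R, exists l : E,
    (fun n : nat => \sum_(k < n) r k *: a k) @ \oo --> l.

Definition nontrivial_seq (R : realType) (E : topologicalLmodType R)
    (a : nat -> E) : Prop :=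
  infinite_set [set n | a n != 0].

(* A topological isomorphism f of R^N onto a subspace maps the unit vectors to a
   non-trivial R^N-convergent sequence, since the partial sums of r = sum r_n e_n
   converge to r coordinatewise.

   Conversely, let (a_n) be non-trivial and R^N-convergent.  A gliding hump
   argument shows that the tails sum_{k >= N} d_k a_k become uniformly small as
   N grows.  Indices q_0 < q_1 < ... are then chosen so that a_(q_J) lies
   outside the closure of the span of the a_(q_j), j < J, and of the a_k,
   k > q_J; such an index always exists, because otherwise the Hausdorff
   property forces a_p = 0 for all large p.  This separation makes the
   coordinate functionals of the subsequence b = a o q equicontinuous on its
   partial sums, and then r |-> sum_j r_j b_j is linear, injective, continuous
   (by the uniform smallness of tails) and open onto its range (by the control
   of the coordinates). *)

From HB Require Import structures.
From mathcomp Require Import all_boot all_order all_algebra.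
From mathcomp Require Import all_classical all_reals all_analysis.
Set Implicit Arguments. Unset Strict Implicit. Unset Printing Implicit Defensive.
Import Order.TTheory GRing.Theory Num.Theory.
Import numFieldTopology.Exports numFieldNormedType.Exports.
Local Open Scope classical_set_scope.
Local Open Scope ring_scope.

Section TopologicalLmodule.
Context {R : realType} {E : topologicalLmodType R}.

Lemma continuous_addr (b : E) : continuous (fun x : E => x + b).
Proof.
move=> x; apply: (@continuous_comp _ _ _ (fun x => (x, b)) (fun z : E * E => z.1 + z.2)).
  by apply: cvg_pair; [exact: cvg_id | exact: cvg_cst].
exact: add_continuous.
Qed.

Lemma continuous_scaler (c : R) : continuous (fun x : E => c *: x).
Proof.
move=> x; apply: (@continuous_comp E (R^o * E)%type E (fun x => (c, x)) (fun z => z.1 *: z.2)).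
  by apply: (@cvg_pair _ _ _ _ (nbhs (c : R^o))); [exact: cvg_cst | exact: cvg_id].
exact: scale_continuous.
Qed.

Lemma continuous_scalel (x : E) : continuous (fun t : R^o => t *: x).
Proof.
move=> t; apply: (@continuous_comp R^o (R^o * E)%type E (fun t => (t, x)) (fun z => z.1 *: z.2)).
  by apply: (@cvg_pair _ _ _ _ (nbhs (t : R^o))); [exact: cvg_id | exact: cvg_cst].
exact: scale_continuous.
Qed.

Lemma continuous_affine (c : R) (b : E) : continuous (fun x : E => c *: x + b).
Proof.
move=> x; apply: (@continuous_comp _ _ _ (fun x => c *: x) (fun y => y + b)).
  exact: continuous_scaler.
exact: continuous_addr.
Qed.

Section Limits.
Context {T : Type} (F : set_system T) {FF : Filter F}.

Lemma cvg_lmodD (u v : T -> E) (l l' : E) :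
  u @ F --> l -> v @ F --> l' -> (fun t => u t + v t) @ F --> l + l'.
Proof.
move=> hu hv; apply: cvg_trans.
  exact: (cvg_app (fun z : E * E => z.1 + z.2) (cvg_pair hu hv)).
exact: (@add_continuous E (l, l')).
Qed.

Lemma cvg_lmodB (u v : T -> E) (l l' : E) :
  u @ F --> l -> v @ F --> l' -> (fun t => u t - v t) @ F --> l - l'.
Proof.
move=> hu hv; apply: cvg_trans.
  exact: (cvg_app (fun z : E * E => z.1 - z.2) (cvg_pair hu hv)).
exact: (@sub_continuous E (l, l')).
Qed.

Lemma cvg_lmodZ (c : R) (u : T -> E) (l : E) :
  u @ F --> l -> (fun t => c *: u t) @ F --> c *: l.
Proof.
move=> hu; apply: cvg_trans; first exact: (cvg_app (fun z => c *: z) hu).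
exact: continuous_scaler.
Qed.

End Limits.

Lemma nbhs0_split_add (U : set E) : nbhs 0 U ->
  exists2 V : set E, nbhs 0 V & forall x y, V x -> V y -> U (x + y).
Proof.
move=> U0; have := @add_continuous E (0, 0) U; rewrite /= addr0 => /(_ U0).
move=> [[P Q] /= [P0 Q0] PQU]; exists (P `&` Q); first exact: filterI.
by move=> x y [Px _] [_ Qy]; apply: (PQU (x, y)).
Qed.

Lemma nbhs0_scale_small (U : set E) : nbhs 0 U ->
  exists2 d : R, 0 < d & exists2 V : set E, nbhs 0 V &
    forall (t : R) x, `|t| < d -> V x -> U (t *: x).
Proof.
move=> U0; have := @scale_continuous R E ((0 : R^o), (0 : E)) U.
rewrite /= scale0r => /(_ U0) [[P Q] /= [/nbhs_ballP [d d0 dP] Q0] PQU].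
exists d => //; exists Q => // t x td Qx; apply: (PQU (t, x)); split => //=.
by apply: dP; rewrite /ball /= sub0r normrN.
Qed.

Definition balanced_core (U : set E) := [set x : E | forall t : R, `|t| <= 1 -> U (t *: x)].

Lemma balanced_core_sub (U : set E) : balanced_core U `<=` U.
Proof. by move=> x /(_ 1); rewrite scale1r normr1; apply. Qed.

Lemma balanced_coreZ (U : set E) (t : R) x :
  `|t| <= 1 -> balanced_core U x -> balanced_core U (t *: x).
Proof. by move=> t1 Ux s s1; rewrite scalerA; apply: Ux; rewrite normrM -[1]mulr1 ler_pM. Qed.

Lemma nbhs0_balanced_core (U : set E) : nbhs 0 U -> nbhs 0 (balanced_core U).
Proof.
move=> /nbhs0_scale_small [d d0 [V V0 VU]].
have d20 : 0 < d / 2 by rewrite divr_gt0.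
have V20 : nbhs 0 [set x | V ((d / 2)^-1 *: x)].
  by apply: (@continuous_scaler _ 0); rewrite scaler0.
apply: filterS V20 => x Vx t t1.
have -> : t *: x = (t * (d / 2)) *: ((d / 2)^-1 *: x).
  by rewrite scalerA -mulrA divff ?mulr1 // gt_eqF.
apply: VU => //; rewrite normrM (gtr0_norm d20).
apply: (@le_lt_trans _ _ (d / 2)); first by rewrite -[leRHS]mul1r ler_pM // ltW.
by rewrite ltr_pdivrMr // ltr_pMr // ltr1n.
Qed.

End TopologicalLmodule.

Section Sums.
Context {R : pzRingType} {V : lmodType R}.
Implicit Types (a : nat -> V) (d : nat -> R).

Lemma big_ord_diff (F : nat -> V) N M : (N <= M)%N ->
  \sum_(k < M) F k - \sum_(k < N) F k = \sum_(N <= k < M) F k.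
Proof.
move=> NM; rewrite -!(big_mkord xpredT F) (@big_cat_nat _ _ _ N 0 M _ _ (leq0n N) NM) /=.
by rewrite addrAC subrr add0r.
Qed.

Lemma sumZ_supp_ge d a N M : (forall k, (k < N)%N -> d k = 0) ->
  \sum_(k < M) d k *: a k = \sum_(N <= k < M) d k *: a k.
Proof.
move=> dN; case: (leqP M N) => MN.
  rewrite big_geq // big1 // => i _; rewrite dN ?scale0r //.
  exact: leq_trans (ltn_ord i) MN.
rewrite -(big_mkord xpredT (fun k => d k *: a k)).
rewrite (@big_cat_nat _ _ _ N 0 M _ _ (leq0n N) (ltnW MN)) /=.
rewrite [X in X + _]big_nat_cond big1 ?add0r // => i /andP[/andP[_ iN] _].
by rewrite dN ?scale0r.
Qed.

Lemma sumZ_widen d a M M' : (M <= M')%N ->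
  \sum_(k < M) d k *: a k = \sum_(k < M') (if (k < M)%N then d k else 0) *: a k.
Proof.
move=> MM'; rewrite (big_ord_widen M' (fun k => d k *: a k) MM') big_mkcond /=.
by apply: eq_bigr => k _; case: ifP => _; rewrite ?scale0r.
Qed.

Lemma sumZ_split_lt d a N M :
  \sum_(k < M) d k *: a k = \sum_(k < M) (if (k < N)%N then d k else 0) *: a k
                          + \sum_(k < M) (if (k < N)%N then 0 else d k) *: a k.
Proof.
rewrite -big_split /=; apply: eq_bigr => k _.
by case: ifP => _; rewrite scale0r ?addr0 ?add0r.
Qed.

Lemma sumZ_split_eq d a p M :
  \sum_(k < M) d k *: a k = \sum_(k < M) (if k == p :> nat then 0 else d k) *: a k
                          + (if (p < M)%N then d p else 0) *: a p.
Proof.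
have -> : \sum_(k < M) d k *: a k = \sum_(k < M) (if k == p :> nat then 0 else d k) *: a k
     + \sum_(k < M) (if k == p :> nat then d p *: a p else 0).
  rewrite -big_split /=; apply: eq_bigr => k _.
  by case: eqP => [->|_]; rewrite ?scale0r ?add0r ?addr0.
congr (_ + _); rewrite -big_mkcond /=; case: (ltnP p M) => pM.
  by rewrite (big_pred1 (Ordinal pM)).
rewrite big_pred0 ?scale0r // => k; apply/negP => /eqP kp.
by move: (ltn_ord k); rewrite kp ltnNge pM.
Qed.

Lemma sumZ_sub_delta d a (c : R) p M : (p < M)%N ->
  \sum_(k < M) (c * d k - (if k == p :> nat then c else 0)) *: a k
    = c *: (\sum_(k < M) d k *: a k - a p).
Proof.
move=> pM; under eq_bigr do rewrite scalerBl.
rewrite sumrB scalerBr scaler_sumr; congr (_ - _).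
  by apply: eq_bigr => k _; rewrite scalerA.
rewrite (bigD1 (Ordinal pM)) //= eqxx big1 ?addr0 // => k.
by rewrite -val_eqE /= => /negbTE ->; rewrite scale0r.
Qed.

End Sums.

Lemma nbhs0_sumZ_small {R : realType} {E : topologicalLmodType R} (a : nat -> E) (m : nat)
    (U : set E) : nbhs 0 U ->
  exists2 del : R, 0 < del & forall (d : nat -> R) M, (forall k, (k < m)%N -> `|d k| < del) ->
    (forall k, (m <= k)%N -> d k = 0) -> U (\sum_(k < M) d k *: a k).
Proof.
elim: m U => [|m IH] U U0.
  exists 1 => // d M _ d0; rewrite big1; first exact: nbhs_singleton.
  by move=> k _; rewrite d0 ?scale0r.
have [V V0 VVU] := nbhs0_split_add U0.
have [d1 d10 h1] := IH V V0.
have /nbhs_ballP [d2 d20 h2] : nbhs (0 : R^o) [set t : R | V (t *: a m)].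
  by move: (@continuous_scalel _ _ (a m) 0 V); rewrite scale0r; apply.
exists (Num.min d1 d2); first by rewrite lt_min d10.
move=> d M dsmall dm; rewrite (sumZ_split_eq _ _ m); apply: VVU.
  apply: (h1 (fun k => if k == m then 0 else d k)).
    move=> k km; case: eqP => [_|_]; first by rewrite normr0.
    by apply: lt_le_trans (dsmall k (ltnW km)) _; rewrite ge_min lexx.
  move=> k mk; case: eqP => // /eqP km; apply: dm.
  by rewrite ltn_neqAle eq_sym km.
apply: h2; rewrite /ball /= sub0r normrN.
case: ifP => _; last by rewrite normr0.
by apply: lt_le_trans (dsmall m (ltnSn m)) _; rewrite ge_min lexx orbT.
Qed.

Lemma cvg_comp_geq {T : topologicalType} (u : nat -> T) (phi : nat -> nat) (l : T) :
  (forall n, (n <= phi n)%N) -> u @ \oo --> l -> (u \o phi) @ \oo --> l.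
Proof.
move=> phi_ge ul U /ul [N _ NU]; exists N => // n /= Nn.
exact/NU/(leq_trans Nn (phi_ge n)).
Qed.

Section BlockDecomposition.
Variable next : nat -> nat.

Fixpoint block_start (k : nat) : nat :=
  if k is k'.+1 then
    (if k'.+1 == next (block_start k') then k'.+1 else block_start k')
  else 0.

Lemma block_startD s i :
  block_start s = s -> (s + i < next s)%N -> block_start (s + i)%N = s.
Proof.
move=> bs; elim: i => [|i IH] hi; first by rewrite addn0.
move: hi; rewrite addnS => hi /=; rewrite IH ?(ltnW hi) //.
by rewrite ifN // neq_ltn hi.
Qed.

Hypothesis next_gt : forall s, (s < next s)%N.

Lemma block_start_next s : block_start s = s -> block_start (next s) = next s.
Proof.
move=> bs; have e : next s = (s + (next s - s.+1)).+1%N.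
  by rewrite -addnS subnSK ?subnKC // ltnW.
by rewrite [in LHS]e /= block_startD // -?e ?eqxx // -ltnS -e.
Qed.

Lemma block_start_iter j : block_start (iter j next 0) = iter j next 0.
Proof. by elim: j => [|j IH] //=; rewrite block_start_next. Qed.

Lemma iter_next_ge j : (j <= iter j next 0)%N.
Proof. by elim: j => [|j IH] //=; apply: leq_ltn_trans IH (next_gt _). Qed.

End BlockDecomposition.

Section GlidingHump.
Context {R : realType} {E : topologicalLmodType R}.

Lemma sumZ_glued_block (next : nat -> nat) (D : nat -> nat -> R) (a : nat -> E) s :
  (s <= next s)%N -> block_start next s = s -> (forall k, (k < s)%N -> D s k = 0) ->
  \sum_(k < next s) D (block_start next k) k *: a k
    - \sum_(k < s) D (block_start next k) k *: a k = \sum_(k < next s) D s k *: a k.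
Proof.
move=> s_le bs Ds0.
rewrite (big_ord_diff (fun k => D (block_start next k) k *: a k)) // (sumZ_supp_ge _ _ Ds0).
apply: eq_big_nat => k /andP[sk kM].
by rewrite -(subnKC sk) block_startD // subnKC.
Qed.

Lemma RN_convergent_tail_small (a : nat -> E) : RN_convergent a ->
  forall U : set E, nbhs 0 U -> exists N, forall (d : nat -> R) M,
    (forall k, (k < N)%N -> d k = 0) -> U (\sum_(k < M) d k *: a k).
Proof.
move=> acvg U U0; apply: contrapT => noN.
have bad N : exists dM : (nat -> R) * nat,
    (forall k, (k < N)%N -> dM.1 k = 0) /\ ~ U (\sum_(k < dM.2) dM.1 k *: a k).
  apply: contrapT => /forallNP noDM; apply: noN; exists N => d M d0.
  by apply: contrapT => dMU; apply: (noDM (d, M)).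
have [DM DMP] := choice bad.
pose D N := (DM N).1; pose next N := (DM N).2.
have next_gt s : (s < next s)%N.
  rewrite ltnNge; apply/negP => next_le; have [D0 notU] := DMP s; apply: notU.
  rewrite big1; first exact: nbhs_singleton.
  by move=> i _; rewrite D0 ?scale0r //; apply: leq_trans (ltn_ord i) next_le.
(* Glue the bad blocks along [[s, next s)] starting from 0: the glued series
   converges, so its block differences tend to 0, yet none of them is in U. *)
pose S n := \sum_(k < n) D (block_start next k) k *: a k.
have [l Sl] := acvg (fun k => D (block_start next k) k).
pose st j := iter j next 0.
have blocks0 : (fun j => S (st j.+1) - S (st j)) @ \oo --> l - l.
  apply: cvg_lmodB.
    apply: (@cvg_comp_geq _ S (fun j => st j.+1)) => // n.
    exact: leq_trans (iter_next_ge next_gt n) (ltnW (next_gt _)).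
  by apply: (@cvg_comp_geq _ S st) => // n; exact: iter_next_ge.
rewrite subrr in blocks0; have [N _ NU] := blocks0 U U0.
have [D0 notU] := DMP (st N).
have hump : S (st N.+1) - S (st N) = \sum_(k < next (st N)) D (st N) k *: a k :=
  sumZ_glued_block a (ltnW (next_gt (st N))) (block_start_iter next_gt N) D0.
exact: notU (eq_ind _ U (NU N (leqnn N)) _ hump).
Qed.

End GlidingHump.

Lemma closure_continuous_map {T U : topologicalType} (g : T -> U) (A : set T) (B : set U) x :
  continuous g -> (forall y, A y -> B (g y)) -> closure A x -> closure B (g x).
Proof.
move=> gC AB Ax C Cgx; have [y [Ay Cgy]] := Ax _ (gC x C Cgx).
by exists (g y); split => //; apply: AB.
Qed.

Lemma closure_closure {T : topologicalType} (A : set T) : closure (closure A) = closure A.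
Proof. by rewrite -(closure_id (closure A)).1 //; exact: closed_closure. Qed.

Lemma homo_ltn_geq (q : nat -> nat) : {homo q : i j / (i < j)%N} -> forall j, (j <= q j)%N.
Proof. by move=> q_lt; elim=> // j IH; apply: leq_ltn_trans IH (q_lt _ _ (ltnSn j)). Qed.

Definition coordinates_controlled {R : realType} {E : topologicalLmodType R} (b : nat -> E) :=
  forall J, exists N (V : set E), nbhs 0 V /\ forall (r : nat -> R) n, (N <= n)%N ->
    V (\sum_(j < n) r j *: b j) -> forall j, (j < J)%N -> `|r j| < 1.

Section Subsequence.
Context {R : realType} {E : topologicalLmodType R}.
Variable a : nat -> E.
Hypothesis a_cvg : RN_convergent a.

Definition unchosen (J : nat) (f : nat -> nat) (k : nat) := forall j, (j < J)%N -> f j != k.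

Lemma chosenP J f k : ~ unchosen J f k -> exists2 j, (j < J)%N & f j = k.
Proof.
move=> chosen; apply: contrapT => noj; apply: chosen => j jJ.
by apply/eqP => fjk; apply: noj; exists j.
Qed.

Definition coord_control J f m (V : set E) : Prop :=
  [/\ nbhs 0 V, (forall j, (j < J)%N -> (f j < m)%N) &
   forall (d : nat -> R) M, (m <= M)%N -> (forall k, (k < m)%N -> unchosen J f k -> d k = 0) ->
     V (\sum_(k < M) d k *: a k) -> forall j, (j < J)%N -> `|d (f j)| < 1].

Definition tail_span J f p : set E := [set y | exists (d : nat -> R) M,
  (forall k, (k <= p)%N -> unchosen J f k -> d k = 0) /\ y = \sum_(k < M) d k *: a k].

Lemma tail_spanD J f p x y : tail_span J f p x -> tail_span J f p y -> tail_span J f p (x + y).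
Proof.
move=> [d1 [M1 [d10 ->]]] [d2 [M2 [d20 ->]]].
exists (fun k => (if (k < M1)%N then d1 k else 0) + (if (k < M2)%N then d2 k else 0)).
exists (maxn M1 M2); split.
  by move=> k kp unch; rewrite d10 // d20 //; case: ifP; case: ifP; rewrite addr0.
rewrite (sumZ_widen d1 a (leq_maxl M1 M2)) (sumZ_widen d2 a (leq_maxr M1 M2)) -big_split /=.
by apply: eq_bigr => k _; rewrite scalerDl.
Qed.

Lemma tail_spanZ J f p (c : R) x : tail_span J f p x -> tail_span J f p (c *: x).
Proof.
move=> [d [M [d0 ->]]]; exists (fun k => c * d k), M; split.
  by move=> k kp unch; rewrite d0 // mulr0.
by rewrite scaler_sumr; apply: eq_bigr => k _; rewrite scalerA.
Qed.

Lemma tail_span_drop J f p (d : nat -> R) M : (p < M)%N ->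
  (forall k, (k < p)%N -> unchosen J f k -> d k = 0) ->
  tail_span J f p (\sum_(k < M) d k *: a k - d p *: a p).
Proof.
move=> pM d0; exists (fun k => if k == p then 0 else d k), M; split.
  move=> k kp unch; case: eqP => // /eqP kNp; apply: d0 => //.
  by rewrite ltn_neqAle kNp.
by rewrite (sumZ_split_eq d a p M) pM addrK.
Qed.

Section ClosureChain.
Variables (J : nat) (f : nat -> nat) (m : nat).
Hypothesis a_in_closure : forall q, (m <= q)%N -> closure (tail_span J f q) (a q).

Lemma closure_tail_span_succ p : (m <= p)%N ->
  closure (tail_span J f p) `<=` closure (tail_span J f p.+1).
Proof.
move=> mp; rewrite -[X in _ `<=` X]closure_closure; apply: closureS.
move=> _ [d [M [d0 ->]]]; rewrite (sumZ_split_eq d a p.+1 M).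
set c := (if (p.+1 < M)%N then d p.+1 else 0).
set y := \sum_(k < M) _.
have y_span : tail_span J f p.+1 y.
  exists (fun k => if k == p.+1 then 0 else d k), M; split => //.
  move=> k kp unch; case: eqP => // /eqP kNp; apply: d0 => //.
  by rewrite -ltnS ltn_neqAle kNp kp.
rewrite addrC; apply: (@closure_continuous_map _ _ (fun x => c *: x + y) (tail_span J f p.+1)).
- exact: continuous_affine.
- by move=> x x_span; apply: tail_spanD => //; apply: tail_spanZ.
- by apply: a_in_closure; apply: leq_trans mp _.
Qed.

Lemma closure_tail_span_mono p i : (m <= p)%N ->
  closure (tail_span J f p) `<=` closure (tail_span J f (p + i)%N).
Proof.
move=> mp; elim: i => [|i IH]; first by rewrite addn0.
rewrite addnS; apply: subset_trans IH (closure_tail_span_succ _).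
exact: leq_trans mp (leq_addr _ _).
Qed.

End ClosureChain.

Lemma sum_small_chosen_small J f m (U : set E) : nbhs 0 U ->
  (forall j, (j < J)%N -> (f j < m)%N) ->
  exists2 del : R, 0 < del & exists N, forall (d : nat -> R) M,
    (forall k, (k <= N)%N -> unchosen J f k -> d k = 0) ->
    (forall j, (j < J)%N -> `|d (f j)| < del) -> U (\sum_(k < M) d k *: a k).
Proof.
move=> U0 f_lt; have [U1 U10 U1U] := nbhs0_split_add U0.
have [del del0 headU1] := nbhs0_sumZ_small a m U10.
have [N0 tailU1] := RN_convergent_tail_small a_cvg U10.
exists del => //; exists (maxn N0 m) => d M d0 dsmall.
rewrite (sumZ_split_lt d a m M); apply: U1U.
  apply: (headU1 (fun k => if (k < m)%N then d k else 0)) => [k km|k mk]; last first.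
    by rewrite ltnNge mk.
  rewrite km; case: (pselect (unchosen J f k)) => [unch|/chosenP [j jJ <-]].
    by rewrite d0 ?normr0 // (leq_trans (ltnW km)) ?leq_maxr.
  exact: dsmall.
apply: (tailU1 (fun k => if (k < m)%N then 0 else d k)) => k kN0.
case: ifP => // /negbT; rewrite -leqNgt => mk; apply: d0.
  by rewrite ltnW // (leq_trans kN0) ?leq_maxl.
by move=> j jJ; rewrite neq_ltn (leq_trans (f_lt j jJ) mk).
Qed.

Lemma coord_control_near J f m V p (del : R) (d : nat -> R) M :
  coord_control J f m V -> (m <= p)%N -> (p < M)%N -> 0 < del ->
  (forall k, (k < m)%N -> unchosen J f k -> d k = 0) ->
  V (del^-1 *: (\sum_(k < M) d k *: a k - a p)) ->
  forall j, (j < J)%N -> `|d (f j)| < del.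
Proof.
move=> [_ f_lt Vcoord] mp pM del0 d0 Vy j jJ.
have := Vcoord (fun k => del^-1 * d k - (if k == p then del^-1 else 0)) M
  (leq_trans mp (ltnW pM)) _ _ j jJ.
rewrite ifN ?neq_ltn ?(leq_trans (f_lt j jJ) mp) // subr0 normrM gtr0_norm ?invr_gt0 //.
rewrite mulrC ltr_pdivrMr // mul1r; apply.
  move=> k km unch; rewrite d0 // ifN ?mulr0 ?subr0 //.
  by rewrite neq_ltn (leq_trans km mp).
by rewrite sumZ_sub_delta.
Qed.

Hypothesis hE : hausdorff_space E.

Lemma closure_tail_span_eq0 J f m V p : coord_control J f m V -> (m <= p)%N ->
  (forall s, (p <= s)%N -> closure (tail_span J f s) (a p)) -> a p = 0.
Proof.
move=> ctrl mp ap_cl; have [V0 f_lt _] := ctrl.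
apply: esym; apply: hE => U B U0 Bap.
have [del del0 [N smallU]] := sum_small_chosen_small U0 f_lt.
have Bn : nbhs (a p) (B `&` [set y | V (del^-1 *: (y - a p))]).
  apply: filterI => //.
  have := @continuous_affine _ _ del^-1 (- (del^-1 *: a p)) (a p) V.
  rewrite subrr => /(_ V0) Vn; apply: (@filterS _ (nbhs (a p)) _ _ _ _ Vn) => y /=.
  by rewrite scalerBr.
have [_ [[d [M [d0 ->]]] [By Vy]]] := ap_cl (maxn N p) (leq_maxr _ _) _ Bn.
exists (\sum_(k < M) d k *: a k); split => //.
pose d' k := if (k < M)%N then d k else 0.
have d'0 k : (k <= maxn N p)%N -> unchosen J f k -> d' k = 0.
  by move=> kNp unch; rewrite /d'; case: ifP => // _; exact: d0.
have pM' : (p < maxn M p.+1)%N := leq_maxr M p.+1.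
rewrite (sumZ_widen d a (leq_maxl M p.+1)) in Vy *.
apply: (smallU d') => [k kN|]; first by apply: d'0; rewrite (leq_trans kN) ?leq_maxl.
apply: (coord_control_near (d := d') ctrl mp pM' del0 _ Vy) => k km.
by apply: d'0; rewrite ltnW // (leq_trans km) // (leq_trans mp) ?leq_maxr.
Qed.

Hypothesis a_nontriv : nontrivial_seq a.

Lemma tail_span_gap J f m V : coord_control J f m V ->
  exists2 p, (m <= p)%N & ~ closure (tail_span J f p) (a p).
Proof.
move=> ctrl; apply: contrapT => nogap.
have a_cl q : (m <= q)%N -> closure (tail_span J f q) (a q).
  by move=> mq; apply: contrapT => notcl; apply: nogap; exists q.
have [p mp /eqP[]] : exists2 p, (m <= p)%N & a p != 0.
  apply: contrapT => a0; apply: a_nontriv; apply: (sub_finite_set _ (finite_II m)) => n /= an.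
  by rewrite ltnNge; apply/negP => mn; apply: a0; exists n.
apply: (closure_tail_span_eq0 ctrl mp) => s ps.
by have := closure_tail_span_mono a_cl (s - p)%N mp; rewrite subnKC //; apply; exact: a_cl.
Qed.

Lemma coord_control_step J f m V : coord_control J f m V ->
  exists p (V' : set E),
    (m <= p)%N /\ coord_control J.+1 (fun j => if j == J then p else f j) p.+1 V'.
Proof.
move=> ctrl; have [p mp gap] := tail_span_gap ctrl; have [V0 f_lt Vcoord] := ctrl.
have [B Bap Bgap] : exists2 B, nbhs (a p) B & forall y, B y -> ~ tail_span J f p y.
  apply: contrapT => noB; apply: gap => B Bap; apply: contrapT => noy; apply: noB.
  by exists B => // y By y_span; apply: noy; exists y.
pose W := [set w | B (w + a p)].
have W0 : nbhs 0 W by have := @continuous_addr _ _ (a p) 0 B; rewrite add0r => /(_ Bap).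
exists p, (balanced_core (V `&` W)); split => //; split.
- exact: nbhs0_balanced_core (filterI V0 W0).
- move=> j; rewrite ltnS leq_eqVlt => /orP[/eqP ->|jJ] /=; first by rewrite eqxx.
  by rewrite (ltn_eqF jJ) ltnS (leq_trans (ltnW (f_lt j jJ)) mp).
move=> d M pM d0 Vd j jJ.
have d0_old k : (k < p)%N -> unchosen J f k -> d k = 0.
  move=> kp unch; apply: d0 => [|i]; first exact: ltnW.
  rewrite ltnS leq_eqVlt /= => /orP[/eqP ->|iJ]; first by rewrite eqxx neq_ltn kp orbT.
  by rewrite (ltn_eqF iJ); exact: unch.
have [dp1|dp1] := ltP `|d p| 1.
  move: jJ; rewrite ltnS leq_eqVlt /= => /orP[/eqP ->|jJ]; first by rewrite eqxx.
  rewrite (ltn_eqF jJ); apply: (Vcoord d M) (balanced_core_sub Vd).1 j jJ.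
    exact: leq_trans mp (ltnW pM).
  by move=> k km; apply: d0_old; exact: leq_trans km mp.
(* Otherwise rescaling by -(d p)^-1 puts a vector of [tail_span] into [B]. *)
have dp0 : d p != 0 by apply: contraTneq dp1 => ->; rewrite normr0 -ltNge ltr01.
have c1 : `|- (d p)^-1| <= 1 by rewrite normrN normfV invf_le1 // (lt_le_trans ltr01 dp1).
have [_ Wv] := balanced_core_sub (balanced_coreZ c1 Vd); case: (Bgap _ Wv).
have -> y : - (d p)^-1 *: y + a p = - (d p)^-1 *: (y - d p *: a p).
  by rewrite scalerBr scalerA mulNr mulVf // scaleN1r opprK.
by apply: tail_spanZ; exact: tail_span_drop.
Qed.

Lemma coord_control_chain :
  exists (f : nat -> nat -> nat) (m : nat -> nat) (V : nat -> set E), forall J,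
    coord_control J (f J) (m J) (V J) /\
    [/\ (m J <= f J.+1 J)%N, f J.+1 = (fun j => if j == J then f J.+1 J else f J j)
      & m J.+1 = (f J.+1 J).+1].
Proof.
pose state := ((nat -> nat) * nat * set E)%type.
have step (x : nat * state) : exists y : state,
    coord_control x.1 x.2.1.1 x.2.1.2 x.2.2 -> exists p, [/\ (x.2.1.2 <= p)%N,
      y.1.1 = (fun j => if j == x.1 then p else x.2.1.1 j), y.1.2 = p.+1
      & coord_control x.1.+1 y.1.1 y.1.2 y.2].
  case: x => J [[f m] V] /=; have [ctrl|nctrl] := pselect (coord_control J f m V).
    have [p [V' [mp ctrl']]] := coord_control_step ctrl.
    by exists ((fun j => if j == J then p else f j), p.+1, V') => _; exists p.
  by exists (f, m, V).
have [G G_step] := choice step.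
pose st := nat_rect (fun _ => state) ((fun _ => 0%N), 0%N, setT) (fun J s => G (J, s)).
have ctrl J : coord_control J (st J).1.1 (st J).1.2 (st J).2.
  elim: J => [|J IH]; first by split => //=; exact: filterT.
  by have [p [_ _ _]] := G_step (J, st J) IH.
exists (fun J => (st J).1.1), (fun J => (st J).1.2), (fun J => (st J).2) => J; split => //.
have [p [mp f_eq m_eq _]] := G_step (J, st J) (ctrl J).
have fJp : (st J.+1).1.1 J = p by rewrite /= f_eq /= eqxx.
by rewrite fJp; split.
Qed.

Lemma exists_controlled_subsequence : exists q : nat -> nat, (forall j, (q j < q j.+1)%N) /\
  forall J, exists m (V : set E), nbhs 0 V /\ forall (d : nat -> R) M, (m <= M)%N ->
    (forall k, (k < m)%N -> (forall j, q j != k) -> d k = 0) ->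
    V (\sum_(k < M) d k *: a k) -> forall j, (j < J)%N -> `|d (q j)| < 1.
Proof.
have [f [m [V chain]]] := coord_control_chain.
pose q J := f J.+1 J.
have f_q J j : (j < J)%N -> f J j = q j.
  elim: J => [//|J IH]; rewrite ltnS leq_eqVlt => /orP[/eqP ->|jJ] //.
  by have [_ [_ -> _]] := chain J; rewrite /= (ltn_eqF jJ) IH.
have m_q J j : (J <= j)%N -> (m J <= q j)%N.
  move=> Jj; have [_ [mq _ _]] := chain j; apply: leq_trans mq.
  rewrite -(subnKC Jj); elim: (j - J)%N => [|i IH]; first by rewrite addn0.
  apply: leq_trans IH _; rewrite addnS; have [_ [mq' _ ->]] := chain (J + i)%N.
  exact: leq_trans mq' (leqnSn _).
exists q; split => [j|J].
  by have [_ [_ _ e]] := chain j; rewrite -ltnS -e; exact: m_q.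
exists (m J), (V J); have [[V0 _ Vcoord] _] := chain J; split => // d M mM d0 Vd j jJ.
rewrite -(f_q J) //; apply: (Vcoord d M mM) => // k km unch; apply: d0 => // i.
have [iJ|Ji] := ltnP i J; first by rewrite -(f_q J) //; exact: unch.
by rewrite neq_ltn (leq_trans km (m_q _ _ Ji)) orbT.
Qed.

Section Spread.
Variable q : nat -> nat.
Hypothesis q_lt : {homo q : i j / (i < j)%N}.

Let q_ltE i j : (q i < q j)%N = (i < j)%N.
Proof. by rewrite !ltnNge (leq_mono q_lt). Qed.

Let q_ge := homo_ltn_geq q_lt.

Definition spread (r : nat -> R) k := \sum_(j < k.+1 | q j == k) r j.

Lemma spread_q r j : spread r (q j) = r j.
Proof.
have jq : (j < (q j).+1)%N by rewrite ltnS q_ge.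
rewrite /spread (big_pred1 (Ordinal jq)) // => i /=.
by rewrite (inj_eq (incn_inj (leq_mono q_lt))) -val_eqE.
Qed.

Lemma spread_notq r k : (forall j, q j != k) -> spread r k = 0.
Proof. by move=> notq; rewrite /spread big_pred0 // => i; exact: negbTE. Qed.

Lemma sumZ_spread r n : \sum_(k < q n) spread r k *: a k = \sum_(j < n) r j *: a (q j).
Proof.
have spread_gap k i : (q i < k < q i.+1)%N -> spread r k = 0.
  move=> /andP[lt1 lt2]; apply: spread_notq => j; apply/eqP => qjk.
  by move: lt1 lt2; rewrite -qjk !q_ltE ltnS => ij ji; have := leq_trans ij ji; rewrite ltnn.
elim: n => [|n IH].
  rewrite big_ord0 big1 // => k _; rewrite spread_notq ?scale0r // => j.
  by apply/eqP => qjk; move: (ltn_ord k); rewrite -qjk q_ltE.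
have qn_lt : (q n < q n.+1)%N := q_lt (ltnSn n).
rewrite big_ord_recr /= -IH -!(big_mkord xpredT (fun k => spread r k *: a k)).
rewrite (@big_cat_nat _ _ _ (q n) 0 (q n.+1)) ?(ltnW qn_lt) //=; congr (_ + _).
rewrite big_ltn // spread_q big_nat_cond big1 ?addr0 // => k /andP[k_gap _].
by rewrite (spread_gap _ n) ?scale0r.
Qed.

End Spread.

Lemma exists_RN_convergent_controlled_subseq :
  exists b : nat -> E, RN_convergent b /\ coordinates_controlled b.
Proof.
have [q [q_incr q_ctrl]] := exists_controlled_subsequence.
have q_lt : {homo q : i j / (i < j)%N} := homo_ltn ltn_trans q_incr.
exists (a \o q); split.
  move=> r; have [l Sl] := a_cvg (spread q r); exists l.
  suff -> : (fun n => \sum_(j < n) r j *: (a \o q) j) =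
            (fun n => \sum_(k < q n) spread q r k *: a k).
    exact: (cvg_comp_geq (homo_ltn_geq q_lt) Sl).
  by apply: funext => n; rewrite (sumZ_spread q_lt).
move=> J; have [m [V [V0 Vcoord]]] := q_ctrl J.
exists m, V; split => // r n mn; rewrite -(sumZ_spread q_lt) => Vr j jJ.
rewrite -(spread_q q_lt r j); apply: (Vcoord _ (q n)) => //.
  exact: leq_trans mn (homo_ltn_geq q_lt n).
by move=> k _ notq; exact: spread_notq.
Qed.

End Subsequence.

Section RNCylinders.
Context {R : realType}.

Lemma nbhs_RN_cylinder (x : RN R) J (eps : R) : 0 < eps ->
  nbhs x [set y : RN R | forall j, (j < J)%N -> `|y j - x j| < eps].
Proof.
move=> eps0; elim: J => [|J IH]; first by apply: filterS filterT => y _ j.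
have xJ : nbhs x [set y : RN R | `|y J - x J| < eps].
  have ballJ : nbhs (x J) (ball (x J) eps) by exact: nbhsx_ballx.
  apply: (@filterS _ (nbhs x) _ (proj J @^-1` ball (x J) eps)).
    by move=> y; rewrite /ball /= distrC.
  exact: (@proj_continuous nat (fun _ => R) J x _ ballJ).
apply: filterS (filterI IH xJ) => y [yJ yJ'] j.
by rewrite ltnS leq_eqVlt => /orP[/eqP ->|jJ] //; exact: yJ.
Qed.

Lemma RN_cylinder_sub (x : RN R) (U : set (RN R)) : nbhs x U ->
  exists J (eps : R), 0 < eps /\
    forall y : RN R, (forall j, (j < J)%N -> `|y j - x j| < eps) -> U y.
Proof.
pose cyl (p : nat * R) := [set y : RN R | forall j, (j < p.1)%N -> `|y j - x j| < p.2].
pose F := filter_from [set p : nat * R | 0 < p.2] cyl.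
have FF : Filter F.
  apply: filter_from_filter; first by exists (0%N, 1); rewrite /= ltr01.
  move=> [J1 e1] [J2 e2] /= e10 e20; exists (maxn J1 J2, Num.min e1 e2).
    by rewrite /= lt_min e10.
  move=> y /= ye; split => j jJ.
    by apply: lt_le_trans (ye j (leq_trans jJ (leq_maxl _ _))) _; rewrite ge_min lexx.
  by apply: lt_le_trans (ye j (leq_trans jJ (leq_maxr _ _))) _; rewrite ge_min lexx orbT.
have Fx : F --> (x : RN R).
  apply/(@pointwise_cvgP _ _ F x FF) => t A /nbhs_ballP [e e0 eA].
  exists (t.+1, e) => //= y ye; apply: eA; rewrite /ball /= distrC.
  exact: ye.
by move=> /Fx [[J e] /= e0 cylU]; exists J, e; split => // y ye; exact: cylU.
Qed.

End RNCylinders.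

Section SeriesEmbedding.
Context {R : realType} {E : topologicalLmodType R}.
Variable b : nat -> E.
Hypotheses (hE : hausdorff_space E) (b_cvg : RN_convergent b)
  (b_ctrl : coordinates_controlled b).

Definition series_map (r : RN R) : E := projT1 (cid (b_cvg r)).

Lemma series_map_cvg (r : RN R) : (fun n => \sum_(j < n) r j *: b j) @ \oo --> series_map r.
Proof. exact: projT2 (cid (b_cvg r)). Qed.

Lemma series_map_eq (r : RN R) (l : E) :
  (fun n => \sum_(j < n) r j *: b j) @ \oo --> l -> series_map r = l.
Proof.
by move=> rl; exact: (@cvg_unique E hE _ _ _ _ (@series_map_cvg r) rl).
Qed.

Lemma series_map_lin (c : R) (x y : RN R) :
  series_map (fun n => c * x n + y n) = c *: series_map x + series_map y.
Proof.
apply: series_map_eq.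
have -> : (fun n => \sum_(j < n) (c * x j + y j) *: b j) =
          (fun n => c *: \sum_(j < n) x j *: b j + \sum_(j < n) y j *: b j).
  by apply: funext => n; rewrite scaler_sumr -big_split; apply: eq_bigr => j _;
    rewrite scalerDl scalerA.
by apply: cvg_lmodD; [apply: cvg_lmodZ |]; exact: series_map_cvg.
Qed.

Lemma series_mapB (x y : RN R) :
  series_map (fun n => x n - y n) = series_map x - series_map y.
Proof.
apply: series_map_eq.
have -> : (fun n => \sum_(j < n) (x j - y j) *: b j) =
          (fun n => \sum_(j < n) x j *: b j - \sum_(j < n) y j *: b j).
  by apply: funext => n; rewrite -sumrB; apply: eq_bigr => j _; rewrite scalerBl.
by apply: cvg_lmodB; exact: series_map_cvg.
Qed.

Lemma series_mapZ (c : R) (r : RN R) : series_map (fun n => c * r n) = c *: series_map r.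
Proof.
apply: series_map_eq.
have -> : (fun n => \sum_(j < n) (c * r j) *: b j) = (fun n => c *: \sum_(j < n) r j *: b j).
  by apply: funext => n; rewrite scaler_sumr; apply: eq_bigr => j _; rewrite scalerA.
by apply: cvg_lmodZ; exact: series_map_cvg.
Qed.

Lemma series_map_coord_small J (eps : R) : 0 < eps -> exists Ob : set E,
  [/\ open Ob, Ob 0 & forall r, Ob (series_map r) -> forall j, (j < J)%N -> `|r j| < eps].
Proof.
move=> eps0; have [N [V [V0 Vcoord]]] := b_ctrl J.
exists [set z | V° (eps^-1 *: z)]; split.
- apply: open_comp; last exact: open_interior.
  by move=> z _; exact: continuous_scaler.
- by rewrite /= scaler0; exact: nbhs_singleton (nbhs_interior V0).
move=> r Vr j jJ; pose r' := fun n => eps^-1 * r n.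
have r'V : nbhs (series_map r') V°.
  by apply: open_nbhs_nbhs; split; [exact: open_interior | rewrite series_mapZ].
have [N0 _ N0V] := @series_map_cvg r' _ r'V.
have := Vcoord r' (maxn N0 N) (leq_maxr _ _) (interior_subset (N0V _ (leq_maxl _ _))) j jJ.
by rewrite /r' normrM gtr0_norm ?invr_gt0 // mulrC ltr_pdivrMr // mul1r.
Qed.

Lemma series_map_inj : injective series_map.
Proof.
move=> x y xy; apply: funext => j; apply/eqP; apply: contraT => xNy.
have dist0 : 0 < `|x j - y j| by rewrite normr_gt0 subr_eq0.
have [Ob [_ O0 Ocoord]] := @series_map_coord_small j.+1 _ dist0.
have := Ocoord (fun n => x n - y n); rewrite series_mapB xy subrr => /(_ O0 j (ltnSn j)).
by rewrite ltxx.
Qed.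

Lemma series_map_continuous : continuous series_map.
Proof.
move=> x W /= Wx; pose U := [set z | W (z + series_map x)].
have U0 : nbhs 0 U by have := @continuous_addr _ _ (series_map x) 0 W; rewrite add0r; apply.
have [U1 U10 U1U] := nbhs0_split_add U0; have [U2 U20 U2U1] := nbhs0_split_add U10.
have [N tailU2] := RN_convergent_tail_small b_cvg U20.
have [del del0 headU2] := nbhs0_sumZ_small b N U20.
apply: filterS (nbhs_RN_cylinder x N del0) => y xy /=.
rewrite -(subrK (series_map x) (series_map y)) -series_mapB; set r := fun n => y n - x n.
pose S n := \sum_(k < n) r k *: b k.
have rest0 : (fun n => series_map r - S n) @ \oo --> series_map r - series_map r.
  by apply: cvg_lmodB; [exact: cvg_cst | exact: series_map_cvg].
rewrite subrr in rest0; have [M0 _ M0U1] := rest0 U1 U10.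
have -> : series_map r = S (maxn M0 N) + (series_map r - S (maxn M0 N)).
  by rewrite addrC subrK.
apply: U1U; last exact: M0U1 _ (leq_maxl _ _).
rewrite /S (sumZ_split_lt r b N); apply: U2U1.
  apply: (headU2 (fun k => if (k < N)%N then r k else 0)) => k kN; last by rewrite ltnNge kN.
  by rewrite kN; exact: xy.
by apply: (tailU2 (fun k => if (k < N)%N then 0 else r k)) => k ->.
Qed.

Lemma series_map_open (U : set (RN R)) : open U ->
  exists V : set E, open V /\ series_map @` U = V `&` range series_map.
Proof.
move=> oU.
(* V is the union of the translates series_map x + Ob, for x in U and Ob a
   neighbourhood of 0 controlling the coordinates of a cylinder around x in U. *)
pose good x (Ob : set E) := [/\ U x, open Ob, Ob 0 & exists J (eps : R),
  (forall r, Ob (series_map r) -> forall j, (j < J)%N -> `|r j| < eps) /\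
  (forall y : RN R, (forall j, (j < J)%N -> `|y j - x j| < eps) -> U y)].
exists [set z | exists x Ob, good x Ob /\ Ob (z - series_map x)]; split.
  rewrite openE => z [x [Ob [gxO Oz]]]; have [_ oO _ _] := gxO.
  have /(@continuous_addr _ _ (- series_map x) z) Oz' : nbhs (z - series_map x) Ob.
    exact: open_nbhs_nbhs.
  by apply: (@filterS _ (nbhs z) _ _ _ _ Oz') => z' Oz''; exists x, Ob.
apply/seteqP; split.
  move=> _ [x Ux <-]; split; last by exists x.
  have [J [eps [eps0 cylU]]] := RN_cylinder_sub (open_nbhs_nbhs (conj oU Ux)).
  have [Ob [oO O0 Ocoord]] := @series_map_coord_small J _ eps0.
  by exists x, Ob; split; [split => //; exists J, eps | rewrite subrr].
move=> z [[x [Ob [[Ux oO O0 [J [eps [Ocoord cylU]]]] Oz]]] [y _ yz]].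
exists y => //; apply: cylU => j jJ; apply: (Ocoord (fun n => y n - x n)) => //.
by rewrite series_mapB yz.
Qed.

Lemma series_map_top_lin_embedding : top_lin_embedding series_map.
Proof.
split; [exact: series_map_lin | exact: series_map_inj | exact: series_map_continuous |].
exact: series_map_open.
Qed.

End SeriesEmbedding.

Definition RN_unit {R : realType} (n : nat) : RN R := fun k => if k == n then 1 else 0.

Lemma RN_unit_sum_cvg {R : realType} (r : RN R) :
  (fun n => (fun k => \sum_(i < n) r i * RN_unit i k) : RN R) @ \oo --> r.
Proof.
apply/pointwise_cvgP => t A /nbhs_singleton At; exists t.+1 => // n /= tn.
rewrite (bigD1 (Ordinal tn)) //= /RN_unit eqxx mulr1 big1 ?addr0 // => i.
by rewrite -val_eqE /= eq_sym => /negbTE ->; rewrite mulr0.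
Qed.

Section EmbeddingToSequence.
Context {R : realType} {E : topologicalLmodType R}.
Variable f : RN R -> E.
Hypothesis f_lin : forall (c : R) (x y : RN R), f (fun n => c * x n + y n) = c *: f x + f y.

Lemma embedding0 : f (fun _ => 0) = 0.
Proof.
have := f_lin 1 (fun _ => 0) (fun _ => 0).
under [X in f X = _]funext do rewrite mulr0 addr0.
by rewrite scale1r => h; apply: (addrI (f (fun _ => 0))); rewrite addr0 -h.
Qed.

Lemma embedding_sum (r : nat -> R) n :
  f (fun k => \sum_(i < n) r i * RN_unit i k) = \sum_(i < n) r i *: f (RN_unit i).
Proof.
elim: n => [|n IH].
  by rewrite big_ord0 -embedding0; congr f; apply: funext => k; rewrite big_ord0.
rewrite big_ord_recr /= addrC -IH -f_lin; congr f; apply: funext => k.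
by rewrite big_ord_recr /= addrC.
Qed.

End EmbeddingToSequence.

Lemma top_lin_embedding_unit_seq {R : realType} {E : topologicalLmodType R} (f : RN R -> E) :
  top_lin_embedding f -> nontrivial_seq (f \o RN_unit) /\ RN_convergent (f \o RN_unit).
Proof.
move=> [f_lin f_inj f_cont _]; split.
  apply: (@sub_infinite_set _ setT); last exact: infinite_nat.
  move=> n _; apply/eqP => /= fn0.
  have /(congr1 (fun g => g n)) : RN_unit n = (fun _ => 0 : R).
    by apply: f_inj; rewrite fn0 embedding0.
  by rewrite /RN_unit eqxx => /eqP; rewrite oner_eq0.
move=> r; exists (f r).
have -> : (fun n => \sum_(k < n) r k *: (f \o RN_unit) k) =
          f \o (fun n => (fun k => \sum_(i < n) r i * RN_unit i k) : RN R).
  by apply: funext => n; rewrite /= embedding_sum.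
apply: cvg_trans; first exact: (cvg_app f (@RN_unit_sum_cvg R r)).
exact: f_cont.
Qed.

Theorem theorem11p4 (R : realType) (E : topologicalLmodType R)
    (hE : hausdorff_space E) :
  (exists f : RN R -> E, top_lin_embedding f) <->
  (exists a : nat -> E, nontrivial_seq a /\ RN_convergent a).
Proof.
split => [[f /top_lin_embedding_unit_seq a_unit]|[a [a_nontriv a_cvg]]].
  by exists (f \o RN_unit).
have [b [b_cvg b_ctrl]] := exists_RN_convergent_controlled_subseq a_cvg hE a_nontriv.
by exists (series_map b_cvg); exact: series_map_top_lin_embedding.
Qed.
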